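(* Let $T\in B(H)$ satisfy $(T-t_N)^{k_N}(T-t_{N-1})^{k_{N-1}}\cdots(T-t_1)^{k_1}=0$, where $t_1,\ldots,t_N\in\mathbb C$ are pairwise distinct with $|t_1|\ge|t_2|\ge\cdots\ge|t_N|$ and $k_1,\ldots,k_N$ are positive integers. Define $R_m=\ker\big((T-t_m)^{k_m}\cdots(T-t_1)^{k_1}\big)$ for $0\le m\le N$ ($R_0=\{0\}$), $L_m=R_m\ominus R_{m-1}$ for $1\le m\le N$, and $M_m=H\ominus(L_1\oplus\cdots\oplus L_m)$. Then there exists $0\le m\le N$ such that, with respect to $H=L_1\oplus\cdots\oplus L_m\oplus M_m$, $$T=t_1 1_{L_1}\oplus\cdots\oplus t_m 1_{L_m}\oplus S,$$ where $S\in B(M_m)$ satisfies $(S-t_{m+1})^{k_{m+1}}\cdots(S-t_N)^{k_N}=0$ and $\|S\|>|t_i|$ for all $i\ge m+1$. *)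

From Stdlib Require Import Reals.
Open Scope R_scope.

Record Cpx := mkC { re : R; im : R }.
Definition C0 : Cpx := mkC 0 0.
Definition C1 : Cpx := mkC 1 0.
Definition Cadd (a b : Cpx) : Cpx := mkC (re a + re b) (im a + im b).
Definition Copp (a : Cpx) : Cpx := mkC (- re a) (- im a).
Definition Cmul (a b : Cpx) : Cpx :=
  mkC (re a * re b - im a * im b) (re a * im b + im a * re b).
Definition Cconj (a : Cpx) : Cpx := mkC (re a) (- im a).
Definition Cabs (a : Cpx) : R := sqrt (re a ^ 2 + im a ^ 2).

Record HilbertSpace := {
  hcar :> Type;
  hzero : hcar;
  hadd : hcar -> hcar -> hcar;
  hopp : hcar -> hcar;
  hscal : Cpx -> hcar -> hcar;
  hinner : hcar -> hcar -> Cpx;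
  hadd_assoc : forall x y z, hadd x (hadd y z) = hadd (hadd x y) z;
  hadd_comm : forall x y, hadd x y = hadd y x;
  hadd_zero : forall x, hadd x hzero = x;
  hadd_opp : forall x, hadd x (hopp x) = hzero;
  hscal_addv : forall a x y, hscal a (hadd x y) = hadd (hscal a x) (hscal a y);
  hscal_adds : forall a b x, hscal (Cadd a b) x = hadd (hscal a x) (hscal b x);
  hscal_mul : forall a b x, hscal (Cmul a b) x = hscal a (hscal b x);
  hscal_one : forall x, hscal C1 x = x;
  (* inner product axioms (linear in the first argument) *)
  hinner_add : forall x y z, hinner (hadd x y) z = Cadd (hinner x z) (hinner y z);
  hinner_scal : forall a x y, hinner (hscal a x) y = Cmul a (hinner x y);
  hinner_sym : forall x y, hinner y x = Cconj (hinner x y);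
  hinner_pos : forall x, 0 <= re (hinner x x);
  hinner_def : forall x, hinner x x = C0 -> x = hzero;
  hcomplete : forall u : nat -> hcar,
    (forall eps, eps > 0 -> exists N, forall n m, (n >= N)%nat -> (m >= N)%nat ->
        sqrt (re (hinner (hadd (u n) (hopp (u m))) (hadd (u n) (hopp (u m))))) < eps) ->
    exists l, forall eps, eps > 0 -> exists N, forall n, (n >= N)%nat ->
        sqrt (re (hinner (hadd (u n) (hopp l)) (hadd (u n) (hopp l)))) < eps
}.

Arguments hzero {h}.
Arguments hadd {h}.
Arguments hopp {h}.
Arguments hscal {h}.
Arguments hinner {h}.

Definition hsub {H : HilbertSpace} (x y : H) : H := hadd x (hopp y).
Definition hnorm {H : HilbertSpace} (x : H) : R := sqrt (re (hinner x x)).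

Definition bounded_operator {H : HilbertSpace} (T : H -> H) : Prop :=
  (forall x y, T (hadd x y) = hadd (T x) (T y)) /\
  (forall a x, T (hscal a x) = hscal a (T x)) /\
  (exists c, forall x, hnorm (T x) <= c * hnorm x).

Definition shiftop {H : HilbertSpace} (T : H -> H) (c : Cpx) (x : H) : H :=
  hsub (T x) (hscal c x).

Fixpoint iter_op {H : HilbertSpace} (n : nat) (f : H -> H) (x : H) : H :=
  match n with O => x | S n' => f (iter_op n' f x) end.

(* Pprod T t k m = (T - t_m)^{k_m} ... (T - t_1)^{k_1}   (indices 1-based) *)
Fixpoint Pprod {H : HilbertSpace} (T : H -> H) (t : nat -> Cpx) (k : nat -> nat)
  (m : nat) (x : H) : H :=
  match m with
  | O => x
  | S m' => iter_op (k m) (shiftop T (t m)) (Pprod T t k m' x)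
  end.

(* Qprod T t k j m = (T - t_{m+1})^{k_{m+1}} ... (T - t_{m+j})^{k_{m+j}} *)
Fixpoint Qprod {H : HilbertSpace} (T : H -> H) (t : nat -> Cpx) (k : nat -> nat)
  (j m : nat) (x : H) : H :=
  match j with
  | O => x
  | S j' => iter_op (k (S m)) (shiftop T (t (S m))) (Qprod T t k j' (S m) x)
  end.

Definition Rsp {H : HilbertSpace} (T : H -> H) t k (m : nat) (x : H) : Prop :=
  Pprod T t k m x = hzero.

Definition Lsp {H : HilbertSpace} (T : H -> H) t k (m : nat) (x : H) : Prop :=
  Rsp T t k m x /\ forall y, Rsp T t k (m - 1) y -> hinner x y = C0.

Definition Msp {H : HilbertSpace} (T : H -> H) t k (m : nat) (x : H) : Prop :=
  forall i, (1 <= i <= m)%nat -> forall y, Lsp T t k i y -> hinner x y = C0.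

Definition is_opnorm_on {H : HilbertSpace} (V : H -> Prop) (T : H -> H) (s : R) : Prop :=
  is_lub (fun r => exists x, V x /\ hnorm x <= 1 /\ r = hnorm (T x)) s.

(* Call stage i "dominated" when ||T v|| <= |t_i| ||v|| for all v in M_{i-1},
   and let m be maximal (m <= N) such that stages 1, ..., m are dominated.
   Two spectral facts about an operator dominated by |lam| on an invariant
   subspace V drive the argument: a lam-eigenvector in V is also an
   eigenvector of the adjoint compression (eigenvector_of_adjoint), so every
   generalized eigenvector for lam in V is an eigenvector
   (generalized_eigenvector).  By induction along the dominated stages,
   L_{i} consists of eigenvectors for t_i and M_i is T-invariant
   (dominated_stages_structure); here the orthogonality M_j _|_ R_j, obtained
   from the projection theorem for the closed kernels R_j, is essential.
   Then (T - t_{m+1})^.. ... (T - t_N)^.. maps M_m into the intersection of M_m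
   and R_m, which is {0}; and the failure of domination at stage m + 1 gives
   ||T|_{M_m}|| > |t_{m+1}| >= |t_i|. *)

From Pilot Require Import Defs.
From Stdlib Require Import Reals Lra Lia Psatz Classical ClassicalEpsilon.
Import Defs. (* the complex unit C1 of Defs shadows the Stdlib name C1 *)
Open Scope R_scope.

Lemma Cpx_ext (a b : Cpx) : re a = re b -> im a = im b -> a = b.
Proof. destruct a, b; simpl; intros; subst; reflexivity. Qed.

Ltac ceq := apply Cpx_ext; simpl; ring.

(* Squared modulus |a|^2, which avoids square roots in most estimates. *)
Definition Cabs2 (a : Cpx) : R := re a * re a + im a * im a.

Lemma Cabs2_ge0 (a : Cpx) : 0 <= Cabs2 a.
Proof. unfold Cabs2. nra. Qed.

Lemma Cabs_sqrt_Cabs2 (a : Cpx) : Cabs a = sqrt (Cabs2 a).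
Proof. unfold Cabs, Cabs2. f_equal. ring. Qed.

Lemma nonneg_zero_of_quadratic_bound (a K : R) :
  0 <= a -> (forall e, 0 < e -> 2 * e * a <= e * e * a * K) -> a = 0.
Proof.
  intros Ha Hbound. destruct (Req_dec a 0) as [|Hn]; [assumption|exfalso].
  set (e := / (Rabs K + 1)).
  assert (He : 0 < e) by (unfold e; apply Rinv_0_lt_compat; pose proof (Rabs_pos K); lra).
  assert (He1 : e * (Rabs K + 1) = 1) by (unfold e; field; pose proof (Rabs_pos K); lra).
  pose proof (RRle_abs K). specialize (Hbound e He).
  assert (2 <= e * K) by (apply (Rmult_le_reg_l (e * a)); nra).
  nra.
Qed.

(* The complex form of the same principle: if 2 Re(conj(c) W) <= |c|^2 K
   for every c, then W = 0 (test with c = e W). *)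
Lemma Cpx_zero_of_quadratic_bound (W : Cpx) (K : R) :
  (forall c, 2 * re (Cmul (Cconj c) W) <= Cabs2 c * K) -> W = C0.
Proof.
  intro Hbound.
  assert (HW : Cabs2 W = 0).
  { apply (nonneg_zero_of_quadratic_bound _ K); [apply Cabs2_ge0|].
    intros e He. specialize (Hbound (mkC (e * re W) (e * im W))).
    unfold Cabs2 in *; simpl in *. nra. }
  unfold Cabs2 in HW. apply Cpx_ext; simpl; nra.
Qed.

Lemma Cpx_cancel_conj (lam y z : Cpx) : Cabs2 lam <> 0 ->
  Cmul lam y = Cmul (mkC (Cabs2 lam) 0) z -> Cconj y = Cmul lam (Cconj z).
Proof.
  intros Hnz E. destruct lam as [a b], y as [y1 y2], z as [z1 z2].
  unfold Cabs2 in *; simpl in *. injection E as E1 E2.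
  assert (F1 : a * y1 - b * y2 - (a * a + b * b) * z1 = 0) by lra.
  assert (F2 : a * y2 + b * y1 - (a * a + b * b) * z2 = 0) by lra.
  apply Cpx_ext; simpl; apply (Rmult_eq_reg_l (a * a + b * b)); try exact Hnz.
  - assert (D : (a * a + b * b) * y1 - (a * a + b * b) * (a * z1 - b * - z2)
                = a * (a * y1 - b * y2 - (a * a + b * b) * z1)
                  + b * (a * y2 + b * y1 - (a * a + b * b) * z2)) by ring.
    rewrite F1, F2 in D. lra.
  - assert (D : (a * a + b * b) * - y2 - (a * a + b * b) * (a * - z2 + b * z1)
                = b * (a * y1 - b * y2 - (a * a + b * b) * z1)
                  - a * (a * y2 + b * y1 - (a * a + b * b) * z2)) by ring.
    rewrite F1, F2 in D. lra.
Qed.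

Arguments hadd_assoc {h}. Arguments hadd_comm {h}. Arguments hadd_zero {h}.
Arguments hadd_opp {h}. Arguments hscal_addv {h}. Arguments hscal_adds {h}.
Arguments hscal_mul {h}. Arguments hscal_one {h}. Arguments hinner_add {h}.
Arguments hinner_scal {h}. Arguments hinner_sym {h}. Arguments hinner_pos {h}.
Arguments hinner_def {h}.

Section VectorAlgebra.
Context {H : HilbertSpace}.
Implicit Types x y z p q r s w : H.

Lemma add0l x : hadd hzero x = x.
Proof. rewrite hadd_comm; apply hadd_zero. Qed.

Lemma add_cancel x y z : hadd x y = hadd x z -> y = z.
Proof.
  intro E.
  assert (E2 : hadd (hopp x) (hadd x y) = hadd (hopp x) (hadd x z)) by (rewrite E; reflexivity).
  rewrite !hadd_assoc, (hadd_comm _ x), hadd_opp, !add0l in E2. exact E2.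
Qed.

Lemma scal0 x : hscal C0 x = hzero.
Proof. apply (add_cancel (hscal C0 x)). rewrite hadd_zero, <- hscal_adds. f_equal. ceq. Qed.

Lemma scal_zero (a : Cpx) : hscal a (@hzero H) = hzero.
Proof. apply (add_cancel (hscal a hzero)). rewrite hadd_zero, <- hscal_addv, hadd_zero. reflexivity. Qed.

Lemma opp_scal x : hopp x = hscal (Copp C1) x.
Proof.
  apply (add_cancel x). rewrite hadd_opp. rewrite <- (hscal_one x) at 1.
  rewrite <- hscal_adds, <- (scal0 x). f_equal. ceq.
Qed.

Lemma sub_eq0 x y : hsub x y = hzero -> x = y.
Proof.
  unfold hsub; intro E. apply (add_cancel (hopp y)).
  rewrite (hadd_comm _ x), E, hadd_comm, hadd_opp. reflexivity.
Qed.

Lemma sub_add w p : hadd p (hsub w p) = w.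
Proof. unfold hsub. rewrite (hadd_comm w), hadd_assoc, hadd_opp, add0l. reflexivity. Qed.

Lemma scal_comm (a b : Cpx) x : hscal a (hscal b x) = hscal b (hscal a x).
Proof. rewrite <- !hscal_mul. f_equal. ceq. Qed.

Lemma scal_sub (a : Cpx) x y : hscal a (hsub x y) = hsub (hscal a x) (hscal a y).
Proof. unfold hsub. rewrite hscal_addv, !opp_scal, scal_comm. reflexivity. Qed.

Lemma opp_add x y : hopp (hadd x y) = hadd (hopp x) (hopp y).
Proof. rewrite !opp_scal, hscal_addv. reflexivity. Qed.

Lemma add_sub_swap p q r s : hsub (hadd p q) (hadd r s) = hadd (hsub p r) (hsub q s).
Proof.
  unfold hsub. rewrite opp_add, !hadd_assoc. f_equal.
  rewrite <- !hadd_assoc. f_equal. apply hadd_comm.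
Qed.

Lemma sub_swap p q r s : hsub (hsub p q) (hsub r s) = hsub (hsub p r) (hsub q s).
Proof.
  unfold hsub. rewrite !opp_add, !hadd_assoc. f_equal.
  rewrite <- !hadd_assoc. f_equal. apply hadd_comm.
Qed.

Lemma sub_add_sub w p q : hadd (hsub w p) (hsub p q) = hsub w q.
Proof.
  unfold hsub. rewrite <- hadd_assoc, (hadd_assoc (hopp p)), (hadd_comm (hopp p)),
    hadd_opp, add0l. reflexivity.
Qed.

End VectorAlgebra.

Definition nsq {H : HilbertSpace} (x : H) : R := re (hinner x x).

Section InnerProduct.
Context {H : HilbertSpace}.
Implicit Types x y z a b : H.

Lemma inner_add_r x y z : hinner x (hadd y z) = Cadd (hinner x y) (hinner x z).
Proof.
  rewrite (hinner_sym (hadd y z) x), hinner_add, (hinner_sym x y), (hinner_sym x z).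
  destruct (hinner x y), (hinner x z); ceq.
Qed.

Lemma inner_scal_r (c : Cpx) x y : hinner x (hscal c y) = Cmul (Cconj c) (hinner x y).
Proof.
  rewrite (hinner_sym (hscal c y) x), hinner_scal, (hinner_sym x y).
  destruct c, (hinner x y); ceq.
Qed.

Lemma inner_scal2 (c d : Cpx) x y :
  hinner (hscal c x) (hscal d y) = Cmul (Cmul c (Cconj d)) (hinner x y).
Proof. rewrite hinner_scal, inner_scal_r. destruct c, d, (hinner x y); ceq. Qed.

Lemma inner_zero_l y : hinner hzero y = C0.
Proof. rewrite <- (scal0 y), hinner_scal. ceq. Qed.

Lemma inner_zero_r y : hinner y hzero = C0.
Proof. rewrite hinner_sym, inner_zero_l. ceq. Qed.

Lemma inner_sub_l x y z : hinner (hsub x y) z = Cadd (hinner x z) (Copp (hinner y z)).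
Proof. unfold hsub. rewrite hinner_add, opp_scal, hinner_scal. f_equal. ceq. Qed.

Lemma im_inner_self x : im (hinner x x) = 0.
Proof.
  pose proof (hinner_sym x x) as E. destruct (hinner x x) as [u v].
  unfold Cconj in E. simpl. injection E. lra.
Qed.

Lemma nsq_ge0 x : 0 <= nsq x.
Proof. apply hinner_pos. Qed.

Lemma nsq_eq0 x : nsq x = 0 -> x = hzero.
Proof. intro E. apply hinner_def, Cpx_ext; [exact E | apply im_inner_self]. Qed.

Lemma nsq_zero : nsq (@hzero H) = 0.
Proof. unfold nsq. rewrite inner_zero_l. reflexivity. Qed.

Lemma nsq_scal (c : Cpx) x : nsq (hscal c x) = Cabs2 c * nsq x.
Proof.
  unfold nsq, Cabs2. rewrite inner_scal2. pose proof (im_inner_self x).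
  destruct c, (hinner x x); simpl in *. subst. ring.
Qed.

Lemma nsq_add x y : nsq (hadd x y) = nsq x + 2 * re (hinner x y) + nsq y.
Proof.
  unfold nsq. rewrite hinner_add, !inner_add_r, (hinner_sym x y).
  destruct (hinner x y), (hinner x x), (hinner y y); simpl. ring.
Qed.

Lemma nsq_opp x : nsq (hopp x) = nsq x.
Proof. rewrite opp_scal, nsq_scal. unfold Cabs2; simpl. ring. Qed.

Lemma nsq_sub x y : nsq (hsub x y) = nsq x - 2 * re (hinner x y) + nsq y.
Proof.
  unfold hsub. rewrite nsq_add, nsq_opp, opp_scal, inner_scal_r.
  destruct (hinner x y); simpl. ring.
Qed.

Lemma nsq_zero_sub y : nsq (hsub hzero y) = nsq y.
Proof. rewrite nsq_sub, inner_zero_l, nsq_zero. simpl. ring. Qed.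

Lemma nsq_sub_le x y : nsq (hsub x y) <= 2 * nsq x + 2 * nsq y.
Proof.
  rewrite nsq_sub. pose proof (nsq_ge0 (hadd x y)) as P. rewrite nsq_add in P.
  pose proof (nsq_ge0 x). pose proof (nsq_ge0 y). lra.
Qed.

Lemma parallelogram a b : nsq (hadd a b) + nsq (hsub a b) = 2 * nsq a + 2 * nsq b.
Proof. rewrite nsq_add, nsq_sub. ring. Qed.

(* Cauchy-Schwarz for the real part, from nsq (x + s y) >= 0 with s real. *)
Lemma cauchy_schwarz_re x y : re (hinner x y) ^ 2 <= nsq x * nsq y.
Proof.
  pose proof (nsq_ge0 y) as Hy. destruct (Req_dec (nsq y) 0) as [E|E].
  - apply nsq_eq0 in E. subst y. rewrite inner_zero_r, nsq_zero. simpl. lra.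
  - set (r := re (hinner x y)). set (s := - r / nsq y).
    pose proof (nsq_ge0 (hadd x (hscal (mkC s 0) y))) as P.
    rewrite nsq_add, nsq_scal, inner_scal_r in P.
    unfold Cabs2 in P; simpl in P. fold r in P.
    assert (P2 : 0 <= (nsq x + 2 * s * r + s * s * nsq y) * nsq y) by (apply Rmult_le_pos; lra).
    replace ((nsq x + 2 * s * r + s * s * nsq y) * nsq y) with (nsq x * nsq y - r * r)
      in P2 by (unfold s; field; lra).
    lra.
Qed.

Lemma norm_triangle x y : sqrt (nsq (hadd x y)) <= sqrt (nsq x) + sqrt (nsq y).
Proof.
  pose proof (nsq_ge0 x) as Hx. pose proof (nsq_ge0 y) as Hy.
  pose proof (sqrt_pos (nsq x)). pose proof (sqrt_pos (nsq y)).
  rewrite <- (sqrt_square (sqrt (nsq x) + sqrt (nsq y))) by lra.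
  apply sqrt_le_1_alt. rewrite nsq_add.
  assert (Hr : re (hinner x y) <= sqrt (nsq x) * sqrt (nsq y)).
  { rewrite <- sqrt_mult by assumption.
    destruct (Rle_dec (re (hinner x y)) 0).
    - pose proof (sqrt_pos (nsq x * nsq y)); lra.
    - rewrite <- (sqrt_square (re (hinner x y))) by lra.
      apply sqrt_le_1_alt. pose proof (cauchy_schwarz_re x y). simpl in *. lra. }
  pose proof (sqrt_sqrt (nsq x) Hx). pose proof (sqrt_sqrt (nsq y) Hy). nra.
Qed.

End InnerProduct.

Definition lin {H : HilbertSpace} (f : H -> H) : Prop :=
  (forall x y, f (hadd x y) = hadd (f x) (f y)) /\
  (forall a x, f (hscal a x) = hscal a (f x)).

Definition bnd {H : HilbertSpace} (f : H -> H) : Prop :=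
  exists C, 0 <= C /\ forall x, nsq (f x) <= C * nsq x.

Definition commute {H : HilbertSpace} (f g : H -> H) : Prop :=
  forall x, f (g x) = g (f x).

Section Operators.
Context {H : HilbertSpace}.
Implicit Types f g T : H -> H.

Lemma bounded_operator_lin T : bounded_operator T -> lin T.
Proof. intros [Hadd [Hscal _]]. split; assumption. Qed.

Lemma bounded_operator_bnd T : bounded_operator T -> bnd T.
Proof.
  intros [_ [_ [c Hc]]]. exists (c * c). split; [nra|]. intro x.
  specialize (Hc x). unfold hnorm in Hc. fold (nsq x) (nsq (T x)) in Hc.
  pose proof (nsq_ge0 x) as Hx. pose proof (nsq_ge0 (T x)) as HTx.
  pose proof (sqrt_pos (nsq (T x))).
  pose proof (sqrt_sqrt _ Hx). pose proof (sqrt_sqrt _ HTx). nra.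
Qed.

Lemma lin_zero f : lin f -> f hzero = hzero.
Proof. intros [_ Hs]. rewrite <- (scal0 hzero), Hs, !scal0. reflexivity. Qed.

Lemma lin_sub f : lin f -> forall x y, f (hsub x y) = hsub (f x) (f y).
Proof. intros [Ha Hs] x y. unfold hsub. rewrite Ha, !opp_scal, Hs. reflexivity. Qed.

Lemma lin_comp f g : lin f -> lin g -> lin (fun x => f (g x)).
Proof. intros [fa fs] [ga gs]. split; intros; rewrite ?ga, ?gs, ?fa, ?fs; reflexivity. Qed.

Lemma bnd_comp f g : bnd f -> bnd g -> bnd (fun x => f (g x)).
Proof.
  intros [Cf [Cfp Hf]] [Cg [Cgp Hg]]. exists (Cf * Cg). split; [nra|].
  intro x. specialize (Hf (g x)). specialize (Hg x). nra.
Qed.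

Lemma lin_iter n f : lin f -> lin (iter_op n f).
Proof.
  intro L. induction n as [|n IH]; [split; intros; reflexivity|].
  exact (lin_comp f (iter_op n f) L IH).
Qed.

Lemma bnd_iter n f : bnd f -> bnd (iter_op n f).
Proof.
  intro B. induction n as [|n IH]; [exists 1; split; [lra | intro x; simpl; lra]|].
  exact (bnd_comp f (iter_op n f) B IH).
Qed.

Lemma lin_shift T (a : Cpx) : lin T -> lin (shiftop T a).
Proof.
  intros [Ha Hs]. unfold shiftop. split.
  - intros x y. rewrite Ha, hscal_addv. apply add_sub_swap.
  - intros b x. rewrite Hs, scal_sub, scal_comm. reflexivity.
Qed.

Lemma bnd_shift T (a : Cpx) : bnd T -> bnd (shiftop T a).
Proof.
  intros [C [Cp HC]]. exists (2 * C + 2 * Cabs2 a). split; [pose proof (Cabs2_ge0 a); lra|].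
  intro x. unfold shiftop. eapply Rle_trans; [apply nsq_sub_le|]. rewrite nsq_scal.
  specialize (HC x). nra.
Qed.

Lemma lin_Pprod T t k m : lin T -> lin (Pprod T t k m).
Proof.
  intro L. induction m as [|m IH]; [split; intros; reflexivity|].
  exact (lin_comp _ _ (lin_iter _ _ (lin_shift T (t (S m)) L)) IH).
Qed.

Lemma bnd_Pprod T t k m : bnd T -> bnd (Pprod T t k m).
Proof.
  intro B. induction m as [|m IH]; [exists 1; split; [lra | intro x; simpl; lra]|].
  exact (bnd_comp _ _ (bnd_iter _ _ (bnd_shift T (t (S m)) B)) IH).
Qed.

Lemma shift_commute T (a b : Cpx) : lin T -> commute (shiftop T a) (shiftop T b).
Proof.
  intros L x. unfold shiftop. rewrite !(lin_sub T L), !(proj2 L), !scal_sub, sub_swap.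
  f_equal. f_equal. apply scal_comm.
Qed.

Lemma iter_commute n f g : commute f g -> commute (iter_op n f) g.
Proof. intros C x. induction n as [|n IH]; simpl; [reflexivity|]. rewrite IH. apply C. Qed.

Lemma shift_powers_commute T (a b : Cpx) n n' : lin T ->
  commute (iter_op n (shiftop T a)) (iter_op n' (shiftop T b)).
Proof.
  intros L x. apply iter_commute. intro y. symmetry.
  apply iter_commute. intro z. symmetry. apply shift_commute, L.
Qed.

Lemma Pprod_commute T t k m (a : Cpx) n : lin T ->
  commute (Pprod T t k m) (iter_op n (shiftop T a)).
Proof.
  intros L x. induction m as [|m IH]; simpl; [reflexivity|].
  rewrite IH. apply shift_powers_commute, L.
Qed.

Lemma Pprod_Qprod T t k j : lin T ->
  forall m x, Pprod T t k m (Qprod T t k j m x) = Pprod T t k (m + j) x.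
Proof.
  intro L. induction j as [|j IH]; intros m x; simpl.
  - rewrite Nat.add_0_r. reflexivity.
  - rewrite Pprod_commute by exact L.
    replace (m + S j)%nat with (S m + j)%nat by lia.
    rewrite <- IH. reflexivity.
Qed.

End Operators.

Lemma sqrt_lt_sq (x e : R) : 0 <= x -> 0 < e -> x < e * e -> sqrt x < e.
Proof. intros. rewrite <- (sqrt_square e) by lra. apply sqrt_lt_1_alt. lra. Qed.

Lemma sqrt_add_le (a b : R) : 0 <= a -> 0 <= b -> sqrt (a + b) <= sqrt a + sqrt b.
Proof.
  intros Ha Hb. pose proof (sqrt_pos a). pose proof (sqrt_pos b).
  rewrite <- (sqrt_square (sqrt a + sqrt b)) by lra.
  apply sqrt_le_1_alt. pose proof (sqrt_sqrt a Ha). pose proof (sqrt_sqrt b Hb). nra.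
Qed.

Lemma inv_INR_S_le (n N : nat) : (0 < N)%nat -> (N <= n)%nat -> / INR (S n) <= / INR N.
Proof. intros. apply Rinv_le_contravar; [apply lt_0_INR; lia | apply le_INR; lia]. Qed.

Definition subspace {H : HilbertSpace} (V : H -> Prop) : Prop :=
  V hzero /\ (forall x y, V x -> V y -> V (hadd x y)) /\ (forall a x, V x -> V (hscal a x)).

Definition invariant {H : HilbertSpace} (f : H -> H) (V : H -> Prop) : Prop :=
  forall x, V x -> V (f x).

Definition converges {H : HilbertSpace} (u : nat -> H) (l : H) : Prop :=
  forall eps, eps > 0 -> exists N, forall n, (n >= N)%nat -> sqrt (nsq (hsub (u n) l)) < eps.

Definition closed {H : HilbertSpace} (V : H -> Prop) : Prop :=
  forall u l, (forall n, V (u n)) -> converges u l -> V l.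

Section Subspaces.
Context {H : HilbertSpace}.
Implicit Types (V : H -> Prop) (f T : H -> H).

Lemma subspace_sub V : subspace V -> forall x y, V x -> V y -> V (hsub x y).
Proof.
  intros [_ [Hadd Hscal]] x y Vx Vy. unfold hsub. apply Hadd; [exact Vx|].
  rewrite opp_scal. apply Hscal, Vy.
Qed.

Lemma invariant_shift T (a : Cpx) V : subspace V -> invariant T V -> invariant (shiftop T a) V.
Proof. intros S I x Vx. unfold shiftop. apply subspace_sub; [exact S | apply I, Vx | apply S, Vx]. Qed.

Lemma invariant_iter n f V : invariant f V -> invariant (iter_op n f) V.
Proof. intros I x Vx. induction n; simpl; auto. Qed.

Lemma invariant_Qprod T t k V : subspace V -> invariant T V ->
  forall j m, invariant (Qprod T t k j m) V.
Proof.
  intros S I j. induction j as [|j IH]; intros m x Vx; simpl; [exact Vx|].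
  apply invariant_iter; [apply invariant_shift; assumption|]. apply IH, Vx.
Qed.

Lemma kernel_subspace f : lin f -> subspace (fun x => f x = hzero).
Proof.
  intro L. split; [|split].
  - apply lin_zero, L.
  - intros x y Ex Ey. rewrite (proj1 L), Ex, Ey. apply hadd_zero.
  - intros a x Ex. rewrite (proj2 L), Ex. apply scal_zero.
Qed.

(* The kernel of a bounded linear map is closed: ||f l|| <= C ||u_n - l|| -> 0. *)
Lemma kernel_closed f : lin f -> bnd f -> closed (fun x => f x = hzero).
Proof.
  intros L [C [Cp HC]] u l Hu Hconv.
  assert (Hsmall : forall e, 0 < e -> nsq (f l) <= C * e).
  { intros e He. destruct (Hconv (sqrt e) (sqrt_lt_R0 e He)) as [N HN].
    specialize (HN N (le_n N)). apply sqrt_lt_0_alt in HN.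
    specialize (HC (hsub (u N) l)). rewrite (lin_sub f L), Hu, nsq_zero_sub in HC. nra. }
  apply nsq_eq0, Rle_antisym; [|apply nsq_ge0]. apply Rnot_lt_le. intro Hpos.
  specialize (Hsmall (nsq (f l) / (2 * (C + 1)))).
  assert (E : C * (nsq (f l) / (2 * (C + 1))) * (2 * (C + 1)) = C * nsq (f l)) by (field; lra).
  assert (Hq : 0 < nsq (f l) / (2 * (C + 1))) by (apply Rdiv_lt_0_compat; lra).
  specialize (Hsmall Hq). nra.
Qed.

End Subspaces.

(* The projection is the limit of a minimizing sequence for
   the distance to w, which is Cauchy by the parallelogram law. *)
Section Projection.
Context {H : HilbertSpace}.
Variable V : H -> Prop.
Hypothesis V_sub : subspace V.

Lemma minimizer_orthogonal (w p : H) : V p ->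
  (forall v, V v -> nsq (hsub w p) <= nsq (hsub w v)) ->
  forall v, V v -> hinner (hsub w p) v = C0.
Proof.
  intros Vp Hmin v Vv. apply (Cpx_zero_of_quadratic_bound _ (nsq v)). intro c.
  assert (Vpc : V (hadd p (hscal c v))) by (apply V_sub; [exact Vp | apply V_sub, Vv]).
  specialize (Hmin _ Vpc).
  assert (E : hsub w (hadd p (hscal c v)) = hsub (hsub w p) (hscal c v))
    by (unfold hsub; rewrite opp_add, hadd_assoc; reflexivity).
  rewrite E, (nsq_sub (hsub w p)), inner_scal_r, nsq_scal in Hmin. lra.
Qed.

Lemma distance_infimum (w : H) : exists d2, 0 <= d2 /\
  (forall v, V v -> d2 <= nsq (hsub w v)) /\
  (forall e, 0 < e -> exists v, V v /\ nsq (hsub w v) < d2 + e).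
Proof.
  set (E := fun r => exists v, V v /\ r = - nsq (hsub w v)).
  destruct (completeness E) as [m [Hub Hlub]].
  { exists 0. intros r [v [_ ->]]. pose proof (nsq_ge0 (hsub w v)). lra. }
  { exists (- nsq (hsub w hzero)), hzero. split; [apply V_sub | reflexivity]. }
  exists (- m). split; [|split].
  - assert (m <= 0); [|lra]. apply Hlub. intros r [v [_ ->]].
    pose proof (nsq_ge0 (hsub w v)). lra.
  - intros v Vv. assert (Hv : E (- nsq (hsub w v))) by (exists v; split; auto).
    specialize (Hub _ Hv). lra.
  - intros e He. apply NNPP. intro Hnone.
    assert (m <= m - e); [|lra]. apply Hlub. intros r [v [Vv ->]].
    apply Rnot_lt_le. intro Hlt. apply Hnone. exists v. split; [exact Vv | lra].
Qed.

(* Parallelogram law: two almost-nearest points are close to each other. *)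
Lemma almost_minimizers_close (w a b : H) (d2 ea eb : R) :
  (forall v, V v -> d2 <= nsq (hsub w v)) -> V a -> V b ->
  nsq (hsub w a) <= d2 + ea -> nsq (hsub w b) <= d2 + eb ->
  nsq (hsub a b) <= 2 * ea + 2 * eb.
Proof.
  intros Hlow Va Vb Ha Hb.
  pose proof (parallelogram (hsub w a) (hsub w b)) as Pg.
  set (mid := hscal (mkC (1/2) 0) (hadd a b)).
  assert (Vmid : V mid) by (apply V_sub, V_sub; assumption).
  assert (Esum : hadd (hsub w a) (hsub w b) = hscal (mkC 2 0) (hsub w mid)).
  { unfold mid. rewrite scal_sub, <- hscal_mul.
    replace (Cmul (mkC 2 0) (mkC (1 / 2) 0)) with C1 by (apply Cpx_ext; simpl; field).
    rewrite hscal_one. replace (mkC 2 0) with (Cadd C1 C1) by ceq.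
    rewrite hscal_adds, hscal_one. symmetry. apply add_sub_swap. }
  assert (Ediff : hsub (hsub w a) (hsub w b) = hsub hzero (hsub a b))
    by (rewrite sub_swap; unfold hsub at 2; rewrite hadd_opp; reflexivity).
  rewrite Esum, Ediff, nsq_scal, nsq_zero_sub in Pg.
  pose proof (Hlow mid Vmid). unfold Cabs2 in Pg; simpl in Pg. lra.
Qed.

Lemma nsq_le_of_splittings (x : H) (d : R) : 0 <= d ->
  (forall g, 0 < g -> exists y z, x = hadd y z /\ nsq y <= d + g /\ nsq z <= g) ->
  nsq x <= d.
Proof.
  intros Hd Hsplit. apply sqrt_le_0; [apply nsq_ge0 | exact Hd |].
  apply Rnot_lt_le. intro Hlt.
  set (delta := (sqrt (nsq x) - sqrt d) / 3).
  assert (Hdelta : 0 < delta) by (unfold delta; lra).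
  destruct (Hsplit (delta * delta)) as [y [z [Ex [Hy Hz]]]]; [nra|].
  pose proof (norm_triangle y z) as Htri. rewrite <- Ex in Htri.
  assert (Sy : sqrt (nsq y) <= sqrt d + delta).
  { rewrite <- (sqrt_square delta) by lra.
    eapply Rle_trans; [apply sqrt_le_1_alt, Hy|].
    apply sqrt_add_le; [exact Hd | nra]. }
  assert (Sz : sqrt (nsq z) <= delta).
  { rewrite <- (sqrt_square delta) by lra. apply sqrt_le_1_alt, Hz. }
  unfold delta in *. lra.
Qed.

Theorem orthogonal_projection : closed V ->
  forall w, exists p, V p /\ forall v, V v -> hinner (hsub w p) v = C0.
Proof.
  intros Vclosed w.
  destruct (distance_infimum w) as [d2 [Hd2 [Hlow Happrox]]].
  assert (Hseq : forall n, exists v, V v /\ nsq (hsub w v) < d2 + / INR (S n)).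
  { intro n. apply Happrox, Rinv_0_lt_compat, lt_0_INR. lia. }
  destruct (choice _ Hseq) as [vs Hvs].
  assert (Hcauchy : forall n m, nsq (hsub (vs n) (vs m)) <= 2 * / INR (S n) + 2 * / INR (S m)).
  { intros n m. destruct (Hvs n), (Hvs m).
    apply (almost_minimizers_close w _ _ d2); auto; lra. }
  destruct (hcomplete H vs) as [p Hlim].
  { intros eps Heps. destruct (archimed_cor1 (eps * eps / 4)) as [N [HN HNpos]]; [nra|].
    exists N. intros n m Hn Hm. change (sqrt (nsq (hsub (vs n) (vs m))) < eps).
    apply sqrt_lt_sq; [apply nsq_ge0 | lra |].
    pose proof (Hcauchy n m). pose proof (inv_INR_S_le n N HNpos Hn).
    pose proof (inv_INR_S_le m N HNpos Hm). lra. }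
  assert (Vp : V p) by exact (Vclosed vs p (fun n => proj1 (Hvs n)) Hlim).
  exists p. split; [exact Vp|]. apply (minimizer_orthogonal w p Vp).
  intros v Vv. eapply Rle_trans; [|apply Hlow, Vv].
  apply nsq_le_of_splittings; [exact Hd2|]. intros g Hg.
  destruct (Hlim (sqrt g) (sqrt_lt_R0 g Hg)) as [N1 HN1].
  destruct (archimed_cor1 g Hg) as [N2 [HN2 HN2pos]].
  set (n := (N1 + N2)%nat).
  exists (hsub w (vs n)), (hsub (vs n) p). split; [|split].
  - symmetry. apply sub_add_sub.
  - pose proof (proj2 (Hvs n)). pose proof (inv_INR_S_le n N2 HN2pos ltac:(lia)). lra.
  - apply Rlt_le, sqrt_lt_0_alt, HN1. unfold n. lia.
Qed.

End Projection.

Section DominatedEigenvalue.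
Context {H : HilbertSpace}.
Variables (T : H -> H) (V : H -> Prop) (lam : Cpx).
Hypotheses (T_lin : lin T) (V_sub : subspace V) (V_inv : invariant T V)
  (T_dominated : forall v, V v -> nsq (T v) <= Cabs2 lam * nsq v).

(* <T x, u> = lam <x, u> for x in V: test the bound on u + c x for all c. *)
Lemma eigenvector_of_adjoint (u x : H) : V u -> V x -> T u = hscal lam u ->
  hinner (T x) u = Cmul lam (hinner x u).
Proof.
  intros Vu Vx Tu.
  destruct (Req_dec (Cabs2 lam) 0) as [L0|L0].
  - assert (Tx0 : T x = hzero).
    { apply nsq_eq0. pose proof (T_dominated x Vx). pose proof (nsq_ge0 (T x)).
      pose proof (nsq_ge0 x). nra. }
    rewrite Tx0, inner_zero_l. unfold Cabs2 in L0. destruct lam as [lr li]; simpl in L0.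
    assert (lr = 0) by nra. assert (li = 0) by nra. subst. ceq.
  - rewrite (hinner_sym u (T x)), (hinner_sym u x). apply Cpx_cancel_conj; [exact L0|].
    set (W := Cadd (Cmul lam (hinner u (T x))) (Copp (Cmul (mkC (Cabs2 lam) 0) (hinner u x)))).
    assert (HW : W = C0).
    { apply (Cpx_zero_of_quadratic_bound W (Cabs2 lam * nsq x - nsq (T x))). intro c.
      assert (Vuc : V (hadd u (hscal c x))) by (apply V_sub; [exact Vu | apply V_sub, Vx]).
      pose proof (T_dominated _ Vuc) as B.
      rewrite (proj1 T_lin), (proj2 T_lin), Tu, !nsq_add, !nsq_scal, inner_scal2,
        inner_scal_r in B.
      unfold W. destruct c, lam, (hinner u (T x)), (hinner u x). unfold Cabs2 in *.
      simpl in *. lra. }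
    unfold W in HW. destruct (Cmul lam (hinner u (T x))), (Cmul (mkC (Cabs2 lam) 0) (hinner u x)).
    injection HW as E1 E2. apply Cpx_ext; simpl; lra.
Qed.

(* (T - lam)^2 v = 0 forces (T - lam) v = 0: with u := (T - lam) v, which is
   a lam-eigenvector, ||u||^2 = <T v - lam v, u> = lam <v, u> - lam <v, u>. *)
Lemma square_kernel_shift (v : H) : V v ->
  shiftop T lam (shiftop T lam v) = hzero -> shiftop T lam v = hzero.
Proof.
  intros Vv E. set (u := shiftop T lam v) in *.
  assert (Vu : V u) by (apply invariant_shift; assumption).
  assert (Tu : T u = hscal lam u) by (apply sub_eq0, E).
  apply nsq_eq0. unfold nsq. unfold u at 1. unfold shiftop.
  rewrite inner_sub_l, (eigenvector_of_adjoint u v Vu Vv Tu), hinner_scal.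
  destruct (Cmul lam (hinner v u)); simpl; ring.
Qed.

Lemma generalized_eigenvector (n : nat) (x : H) : V x ->
  iter_op (S n) (shiftop T lam) x = hzero -> shiftop T lam x = hzero.
Proof.
  revert x. induction n as [|n IH]; intros x Vx E; [exact E|].
  apply IH; [exact Vx|]. apply square_kernel_shift; [|exact E].
  apply invariant_iter; [apply invariant_shift|]; assumption.
Qed.

End DominatedEigenvalue.

Section KernelFlag.
Context {H : HilbertSpace}.
Variables (T : H -> H) (t : nat -> Cpx) (k : nat -> nat).
Hypotheses (T_lin : lin T) (T_bnd : bnd T).

Lemma R_subspace m : subspace (Rsp T t k m).
Proof. apply kernel_subspace, lin_Pprod, T_lin. Qed.

Lemma R_closed m : closed (Rsp T t k m).
Proof. apply kernel_closed; [apply lin_Pprod, T_lin | apply bnd_Pprod, T_bnd]. Qed.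

Lemma R_mono i j x : (i <= j)%nat -> Rsp T t k i x -> Rsp T t k j x.
Proof.
  intros Hij Hx. induction Hij as [|j Hij IH]; [exact Hx|].
  unfold Rsp in *. simpl. rewrite IH. apply lin_zero, lin_iter, lin_shift, T_lin.
Qed.

Lemma M_subspace m : subspace (Msp T t k m).
Proof.
  split; [|split].
  - intros i Hi y Hy. apply inner_zero_l.
  - intros x y Ex Ey i Hi z Hz. rewrite hinner_add, (Ex i Hi z Hz), (Ey i Hi z Hz). ceq.
  - intros a x Ex i Hi z Hz. rewrite hinner_scal, (Ex i Hi z Hz). ceq.
Qed.

Lemma M_mono j x : Msp T t k (S j) x -> Msp T t k j x.
Proof. intros Hx i Hi. apply Hx. lia. Qed.

(* L_{j+1} is orthogonal to R_j, which contains L_1, ..., L_j. *)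
Lemma L_in_M j x : Lsp T t k (S j) x -> Msp T t k j x.
Proof.
  intros [_ Horth] i Hi y Hy. apply Horth. replace (S j - 1)%nat with j by lia.
  apply (R_mono i j); [lia | apply Hy].
Qed.

(* M_j is orthogonal to R_j: decompose w in R_{j} as its projection onto the
   closed subspace R_{j-1} plus a component in L_j. *)
Lemma M_perp_R j y w : Msp T t k j y -> Rsp T t k j w -> hinner y w = C0.
Proof.
  revert y w. induction j as [|j IH]; intros y w My Rw.
  - unfold Rsp in Rw. simpl in Rw. subst. apply inner_zero_r.
  - destruct (orthogonal_projection _ (R_subspace j) (R_closed j) w) as [p [Rp Horth]].
    assert (Lwp : Lsp T t k (S j) (hsub w p)).
    { split.
      - apply subspace_sub; [apply R_subspace | exact Rw | apply (R_mono j); [lia | exact Rp]].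
      - replace (S j - 1)%nat with j by lia. exact Horth. }
    rewrite <- (sub_add w p), inner_add_r, (IH y p (M_mono j y My) Rp).
    rewrite (My (S j) ltac:(lia) _ Lwp). ceq.
Qed.

Lemma R_M_trivial j y : Rsp T t k j y -> Msp T t k j y -> y = hzero.
Proof. intros Ry My. apply nsq_eq0. unfold nsq. rewrite (M_perp_R j y y My Ry). reflexivity. Qed.

Definition dominated_stages (m : nat) : Prop :=
  forall i, (1 <= i <= m)%nat -> forall v, Msp T t k (i - 1) v ->
    nsq (T v) <= Cabs2 (t i) * nsq v.

Lemma dominated_stages_0 : dominated_stages 0.
Proof. intros i Hi. lia. Qed.

Lemma not_dominated_witness m : dominated_stages m -> ~ dominated_stages (S m) ->
  exists v, Msp T t k m v /\ Cabs2 (t (S m)) * nsq v < nsq (T v).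
Proof.
  intros Hdom Hnot. apply NNPP. intro Hnone. apply Hnot. intros i Hi v Mv.
  destruct (Nat.eq_dec i (S m)) as [->|Hne].
  - apply Rnot_lt_le. intro Hlt. apply Hnone. exists v.
    replace (S m - 1)%nat with m in Mv by lia. split; assumption.
  - apply Hdom; [lia | exact Mv].
Qed.

Section Step.
Variable j : nat.
Hypotheses (k_pos : (1 <= k (S j))%nat) (M_inv : invariant T (Msp T t k j))
  (T_dominated : forall v, Msp T t k j v -> nsq (T v) <= Cabs2 (t (S j)) * nsq v).

(* For x in L_{j+1}, (T - t_{j+1})^{k_{j+1}} x lies in R_j and in M_j, hence
   vanishes; by domination x is then an eigenvector. *)
Lemma L_eigenspace x : Lsp T t k (S j) x -> T x = hscal (t (S j)) x.
Proof.
  intro Lx. pose proof (L_in_M j x Lx) as Mx.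
  set (y := iter_op (k (S j)) (shiftop T (t (S j))) x).
  assert (My : Msp T t k j y)
    by (apply invariant_iter; [apply invariant_shift; [apply M_subspace | exact M_inv] | exact Mx]).
  assert (Ry : Rsp T t k j y)
    by (unfold Rsp, y; rewrite Pprod_commute by exact T_lin; apply (proj1 Lx)).
  apply sub_eq0.
  apply (generalized_eigenvector T _ _ T_lin (M_subspace j) M_inv T_dominated (k (S j) - 1));
    [exact Mx|].
  replace (S (k (S j) - 1)) with (k (S j)) by lia. exact (R_M_trivial j y Ry My).
Qed.

(* M_{j+1} stays invariant: for x in M_{j+1} and y in L_{j+1},
   <T x, y> = t_{j+1} <x, y> = 0 since y is an eigenvector of the adjoint. *)
Lemma M_invariant_step : invariant T (Msp T t k (S j)).
Proof.
  intros x Mx i Hi y Ly. destruct (Nat.eq_dec i (S j)) as [->|Hne].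
  - rewrite (eigenvector_of_adjoint T _ _ T_lin (M_subspace j) T_dominated y x
      (L_in_M j y Ly) (M_mono j x Mx) (L_eigenspace y Ly)).
    rewrite (Mx (S j) ltac:(lia) y Ly). ceq.
  - apply (M_inv x (M_mono j x Mx) i); [lia | exact Ly].
Qed.

End Step.

Lemma dominated_stages_structure m : (forall i, (1 <= i <= m)%nat -> (1 <= k i)%nat) ->
  dominated_stages m ->
  (forall i, (1 <= i <= m)%nat -> forall x, Lsp T t k i x -> T x = hscal (t i) x) /\
  invariant T (Msp T t k m).
Proof.
  induction m as [|m IH]; intros Hk Hdom.
  - split; [intros; lia | intros x _ i Hi; lia].
  - destruct IH as [Heig Hinv]; [intros i Hi; apply Hk; lia | intros i Hi; apply Hdom; lia |].
    assert (Hdom_m : forall v, Msp T t k m v -> nsq (T v) <= Cabs2 (t (S m)) * nsq v).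
    { intros v Mv. apply Hdom; [lia|]. replace (S m - 1)%nat with m by lia. exact Mv. }
    assert (Hkm : (1 <= k (S m))%nat) by (apply Hk; lia).
    split.
    + intros i Hi x Lx. destruct (Nat.eq_dec i (S m)) as [->|Hne].
      * exact (L_eigenspace m Hkm Hinv Hdom_m x Lx).
      * apply Heig; [lia | exact Lx].
    + exact (M_invariant_step m Hkm Hinv Hdom_m).
Qed.

End KernelFlag.

Section OperatorNorm.
Context {H : HilbertSpace}.
Variables (T : H -> H) (V : H -> Prop).
Hypotheses (T_lin : lin T) (V_sub : subspace V).

Lemma opnorm_exists : bnd T -> exists s, is_opnorm_on V T s.
Proof.
  intros [C [Cp HC]].
  destruct (completeness (fun r => exists x, V x /\ hnorm x <= 1 /\ r = hnorm (T x)))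
    as [s Hs]; [|exists (hnorm (T hzero)), hzero; split; [apply V_sub | split; [|reflexivity]]|].
  - exists (sqrt C). intros r [x [_ [Hx ->]]]. apply sqrt_le_1_alt.
    assert (nsq x <= 1).
    { apply sqrt_le_0; [apply nsq_ge0 | lra |]. rewrite sqrt_1. exact Hx. }
    specialize (HC x). pose proof (nsq_ge0 x). unfold nsq in *. nra.
  - unfold hnorm. fold (@nsq H hzero). rewrite nsq_zero, sqrt_0. lra.
  - exists s. exact Hs.
Qed.

Lemma opnorm_gt (s c2 : R) (v : H) : is_opnorm_on V T s -> 0 <= c2 -> V v ->
  c2 * nsq v < nsq (T v) -> sqrt c2 < s.
Proof.
  intros [Hub _] Hc2 Vv Hv.
  assert (Hvpos : 0 < nsq v).
  { destruct (Rle_lt_or_eq_dec 0 (nsq v) (nsq_ge0 v)) as [|E]; [assumption|].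
    symmetry in E. apply nsq_eq0 in E. subst v. rewrite (lin_zero T T_lin), nsq_zero in Hv. lra. }
  set (sv := sqrt (nsq v)).
  assert (Hsv : 0 < sv) by (apply sqrt_lt_R0, Hvpos).
  assert (Hsv2 : sv * sv = nsq v) by (apply sqrt_sqrt; lra).
  set (x := hscal (mkC (/ sv) 0) v).
  assert (Hx : nsq x = 1)
    by (unfold x; rewrite nsq_scal; unfold Cabs2; simpl; rewrite <- Hsv2; field; lra).
  assert (HTx : hnorm (T x) <= s).
  { apply Hub. exists x. split; [apply V_sub, Vv | split; [|reflexivity]].
    unfold hnorm. fold (nsq x). rewrite Hx, sqrt_1. lra. }
  assert (ETx : hnorm (T x) = / sv * sqrt (nsq (T v))).
  { unfold hnorm, x. rewrite (proj2 T_lin). fold (nsq (hscal (mkC (/ sv) 0) (T v))).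
    rewrite nsq_scal, sqrt_mult by (apply Cabs2_ge0 || apply nsq_ge0).
    unfold Cabs2; simpl. rewrite Rmult_0_l, Rplus_0_r, sqrt_square; [reflexivity|].
    apply Rlt_le, Rinv_0_lt_compat, Hsv. }
  assert (Hlt : sqrt c2 * sv < sqrt (nsq (T v)))
    by (unfold sv; rewrite <- sqrt_mult by (assumption || lra); apply sqrt_lt_1_alt; nra).
  rewrite ETx in HTx.
  assert (E : / sv * sqrt (nsq (T v)) * sv = sqrt (nsq (T v))) by (field; lra).
  assert (Hmul : / sv * sqrt (nsq (T v)) * sv <= s * sv) by (apply Rmult_le_compat_r; lra).
  apply (Rmult_lt_reg_r sv); lra.
Qed.

End OperatorNorm.

Lemma maximal_prefix (P : nat -> Prop) (n : nat) : P 0%nat ->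
  exists m, (m <= n)%nat /\ P m /\ ((m < n)%nat -> ~ P (S m)).
Proof.
  intro P0. induction n as [|n [m [Hmn [Pm Hmax]]]].
  - exists 0%nat. split; [lia | split; [exact P0 | lia]].
  - destruct (Nat.eq_dec m n) as [->|Hne].
    + destruct (classic (P (S n))) as [PS|PS].
      * exists (S n). split; [lia | split; [exact PS | lia]].
      * exists n. split; [lia | split; [exact Pm | intros _; exact PS]].
    + exists m. split; [lia | split; [exact Pm | intros _; apply Hmax; lia]].
Qed.

Theorem mainTheorem7 (H : HilbertSpace) (T : H -> H) (N : nat)
  (t : nat -> Cpx) (k : nat -> nat)
  (hT : bounded_operator T)
  (hdist : forall i j, (1 <= i <= N)%nat -> (1 <= j <= N)%nat -> i <> j -> t i <> t j)
  (hord : forall i j, (1 <= i <= j)%nat -> (j <= N)%nat -> Cabs (t j) <= Cabs (t i))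
  (hk : forall i, (1 <= i <= N)%nat -> (1 <= k i)%nat)
  (hpoly : forall x : H, Pprod T t k N x = hzero) :
  exists m : nat, (m <= N)%nat /\
    (* T = t_i 1 on L_i for 1 <= i <= m *)
    (forall i, (1 <= i <= m)%nat -> forall x, Lsp T t k i x -> T x = hscal (t i) x) /\
    (* M_m is invariant, S := T|_{M_m} *)
    (forall x, Msp T t k m x -> Msp T t k m (T x)) /\
    (* (S - t_{m+1})^{k_{m+1}} ... (S - t_N)^{k_N} = 0 *)
    (forall x, Msp T t k m x -> Qprod T t k (N - m) m x = hzero) /\
    (* ||S|| > |t_i| for all i >= m+1 *)
    (forall i, (m + 1 <= i <= N)%nat ->
       exists s, is_opnorm_on (Msp T t k m) T s /\ s > Cabs (t i)).
Proof.
  pose proof (bounded_operator_lin T hT) as T_lin.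
  pose proof (bounded_operator_bnd T hT) as T_bnd.
  destruct (maximal_prefix (dominated_stages T t k) N (dominated_stages_0 T t k))
    as [m [HmN [Hdom Hmax]]].
  destruct (dominated_stages_structure T t k T_lin T_bnd m (fun i Hi => hk i ltac:(lia)) Hdom)
    as [Heig Hinv].
  exists m. split; [exact HmN|]. split; [exact Heig|]. split; [exact Hinv|]. split.
  - (* Q x lies in M_m, and in R_m because P_m Q_{N-m} = P_N = 0. *)
    intros x Mx. apply (R_M_trivial T t k T_lin T_bnd m).
    + unfold Rsp. rewrite Pprod_Qprod by exact T_lin.
      replace (m + (N - m))%nat with N by lia. apply hpoly.
    + apply invariant_Qprod; [apply M_subspace | exact Hinv | exact Mx].
  - (* Stage m + 1 is not dominated, so ||S|| > |t_{m+1}| >= |t_i|. *)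
    intros i Hi.
    destruct (not_dominated_witness T t k m Hdom (Hmax ltac:(lia))) as [v [Mv Hv]].
    destruct (opnorm_exists T _ (M_subspace T t k m) T_bnd) as [s Hs].
    exists s. split; [exact Hs|].
    apply Rle_lt_trans with (Cabs (t (S m))); [apply hord; lia|].
    rewrite Cabs_sqrt_Cabs2.
    exact (opnorm_gt T _ T_lin (M_subspace T t k m) s _ v Hs (Cabs2_ge0 _) Mv Hv).
Qed.
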